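(* Let $\mathfrak{d}=\bigoplus_{n\ge0}\mathfrak{d}_n:\mathsf{cf}(\mathrm{UT}_\bullet)\to\mathsf{cf}(\mathrm{UT}_\bullet)$ with $\mathfrak{d}_n(\psi)=\psi\circ\dagger$. Then $\mathfrak{d}$ is a graded antiautomorphism of the Hopf algebra $\mathsf{cf}(\mathrm{UT}_\bullet)$, i.e. $\mu\circ(\mathfrak{d}\otimes\mathfrak{d})=\mathfrak{d}\circ\mu\circ\beta$ and $\Delta\circ\mathfrak{d}=\beta\circ(\mathfrak{d}\otimes\mathfrak{d})\circ\Delta$, where $\beta$ swaps the two tensor factors. Moreover $\mathrm{Ind}^{\mathrm{GL}}_{\mathrm{UT}}\circ\mathfrak{d}=\mathrm{Ind}^{\mathrm{GL}}_{\mathrm{UT}}$, where $\mathrm{Ind}^{\mathrm{GL}}_{\mathrm{UT}}=\bigoplus_n\mathrm{Ind}^{\mathrm{GL}_n}_{\mathrm{UT}_n}$.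
   Context: Fix the finite field $\mathbb{F}_q$; $[n]=\{1,\dots,n\}$. $\mathrm{GL}_n$ is the group of invertible $n\times n$ matrices over $\mathbb{F}_q$, $\mathrm{UT}_n$ the unipotent upper triangular subgroup, $\mathsf{cf}(G)$ complex class functions, $\mathrm{Ind}$ induction. Let $\tilde w(i)=n+1-i$ and for an $n\times n$ matrix $x$ define $x^\dagger$ by $(x^\dagger)_{r,s}=x_{\tilde w(s),\tilde w(r)}$; $\dagger$ is an anti-automorphism of $\mathrm{GL}_n$ preserving $\mathrm{UT}_n$. Hopf algebra $\mathsf{cf}(\mathrm{UT}_\bullet)=\bigoplus_n\mathsf{cf}(\mathrm{UT}_n)$: for $I\subseteq[n]$, $I^c=[n]\setminus I$, let $\mathrm{UL}_I=\{g\in\mathrm{UT}_n:(g-1_n)_{i,j}\ne0\text{ only if }(i,j)\in I\times I\cup I^c\times I^c\}$, $\mathrm{UR}_I=\{g\in\mathrm{UT}_n:(g-1_n)_{i,j}\ne0\text{ only if }(i,j)\in I\times I^c\}$, $\mathrm{UP}_I=\{g\in\mathrm{UT}_n:(g-1_n)_{i,j}=0\text{ for }(i,j)\in I^c\times I\}=\mathrm{UL}_I\ltimes\mathrm{UR}_I$ (and $\mathrm{UP}_{[i]}=\mathrm{UT}_n$). With $\mathrm{cano}_I:I\to[|I|]$ order-preserving, $\mathrm{UL}_I\cong\mathrm{UT}_{|I|}\times\mathrm{UT}_{|I^c|}$ by relabelling the $I\times I$ and $I^c\times I^c$ blocks via $\mathrm{cano}_I,\mathrm{cano}_{I^c}$,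 inducing $\mathrm{st}_{(I,I^c)}:\mathsf{cf}(\mathrm{UL}_I)\to\mathsf{cf}(\mathrm{UT}_{|I|})\otimes\mathsf{cf}(\mathrm{UT}_{|I^c|})$. Product $\mu=\bigoplus_{n\ge i\ge0}\mathrm{Inf}^{\mathrm{UT}_n}_{\mathrm{UL}_{[i]}}\circ\mathrm{st}^{-1}_{([i],[i]^c)}$ where $\mathrm{Inf}\psi(lr)=\psi(l)$; coproduct $\Delta=\bigoplus_n\sum_{I\subseteq[n]}\mathrm{st}_{(I,I^c)}\circ\mathrm{Def}^{\mathrm{UP}_I}_{\mathrm{UL}_I}\circ\mathrm{Res}^{\mathrm{UT}_n}_{\mathrm{UP}_I}$ where $\mathrm{Def}^{\mathrm{UP}_I}_{\mathrm{UL}_I}\psi(g)=\frac1{|\mathrm{UR}_I|}\sum_{x\in\mathrm{UR}_I}\psi(gx)$. *)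

From HB Require Import structures.
From mathcomp Require Import all_boot all_order all_algebra all_field.
Set Implicit Arguments. Unset Strict Implicit. Unset Printing Implicit Defensive.
Import GRing.Theory Num.Theory.
Local Open Scope ring_scope.

(* Indices are 0-based: [n] is 'I_n. *)

Section Defs.
Variable F : finFieldType.

Definition UT (n : nat) : {set 'M[F]_n} :=
  [set g : 'M[F]_n | [forall i : 'I_n, forall j : 'I_n,
     (j <= i)%N ==> (g i j == (i == j)%:R)]].

Definition GL (n : nat) : {set 'M[F]_n} := [set g : 'M[F]_n | g \in unitmx].

(* psi is a class function of the group G (extended by 0 outside G) *)
Definition is_cf (n : nat) (G : {set 'M[F]_n}) (psi : 'M[F]_n -> algC) : Prop :=
  (forall g, g \notin G -> psi g = 0) /\
  (forall g h, g \in G -> h \in G -> psi (invmx h *m g *m h) = psi g).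

(* cf(UT_a) (x) cf(UT_b), identified with cf(UT_a x UT_b) *)
Definition is_cf2 (a b : nat) (Phi : 'M[F]_a -> 'M[F]_b -> algC) : Prop :=
  (forall y, is_cf (UT a) (fun x => Phi x y)) /\ (forall x, is_cf (UT b) (Phi x)).

Definition dag (n : nat) (x : 'M[F]_n) : 'M[F]_n :=
  \matrix_(r, s) x (rev_ord s) (rev_ord r).

Definition dmap (n : nat) (psi : 'M[F]_n -> algC) : 'M[F]_n -> algC :=
  fun g => psi (dag g).

Definition UL (n : nat) (I : {set 'I_n}) : {set 'M[F]_n} :=
  [set g in UT n | [forall i : 'I_n, forall j : 'I_n,
     ((g - 1%:M) i j != 0) ==> ((i \in I) == (j \in I))]].

Definition UR (n : nat) (I : {set 'I_n}) : {set 'M[F]_n} :=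
  [set g in UT n | [forall i : 'I_n, forall j : 'I_n,
     ((g - 1%:M) i j != 0) ==> ((i \in I) && (j \notin I))]].

Definition UP (n : nat) (I : {set 'I_n}) : {set 'M[F]_n} :=
  [set g in UT n | [forall i : 'I_n, forall j : 'I_n,
     ((i \notin I) && (j \in I)) ==> ((g - 1%:M) i j == 0)]].

(* cano_I : I -> [|I|], order preserving (0-based) *)
Definition cano (n : nat) (I : {set 'I_n}) (i : 'I_n) : nat :=
  #|[set k in I | (k < i)%N]|.

Definition relab (n a : nat) (I : {set 'I_n}) (l : 'M[F]_n) (x : 'M[F]_a) : bool :=
  [forall i in I, forall j in I, forall r : 'I_a, forall s : 'I_a,
     ((cano I i == r) && (cano I j == s)) ==> (l i j == x r s)].

Definition st (n a b : nat) (I : {set 'I_n}) (f : 'M[F]_n -> algC)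
    (x : 'M[F]_a) (y : 'M[F]_b) : algC :=
  \sum_(l in UL I | relab I l x && relab (~: I) l y) f l.

Definition st_inv (n a b : nat) (I : {set 'I_n}) (Phi : 'M[F]_a -> 'M[F]_b -> algC)
    (l : 'M[F]_n) : algC :=
  if l \in UL I then
    \sum_(x : 'M[F]_a) \sum_(y : 'M[F]_b | relab I l x && relab (~: I) l y) Phi x y
  else 0.

(* Inf^{UT_n}_{UL_I} psi (l r) = psi l, for l in UL_I, r in UR_I *)
Definition Inf (n : nat) (I : {set 'I_n}) (f : 'M[F]_n -> algC) (g : 'M[F]_n) : algC :=
  \sum_(l in UL I) \sum_(r in UR I | g == l *m r) f l.

Definition Res (n : nat) (I : {set 'I_n}) (psi : 'M[F]_n -> algC) : 'M[F]_n -> algC :=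
  fun g => if g \in UP I then psi g else 0.

Definition Def (n : nat) (I : {set 'I_n}) (f : 'M[F]_n -> algC) : 'M[F]_n -> algC :=
  fun g => if g \in UL I then
             (#|UR I|%:R)^-1 * \sum_(r in UR I) f (g *m r)
           else 0.

Definition initI (n i : nat) : {set 'I_n} := [set k : 'I_n | (k < i)%N].

(* product, component cf(UT_a) (x) cf(UT_b) -> cf(UT_n), used with a + b = n *)
Definition mu (n a b : nat) (Phi : 'M[F]_a -> 'M[F]_b -> algC) : 'M[F]_n -> algC :=
  Inf (initI n a) (st_inv (initI n a) Phi).

(* coproduct, component cf(UT_n) -> cf(UT_a) (x) cf(UT_b), used with a + b = n *)
Definition Delta (n a b : nat) (psi : 'M[F]_n -> algC) (x : 'M[F]_a) (y : 'M[F]_b)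
    : algC :=
  \sum_(I : {set 'I_n} | #|I| == a) st I (Def I (Res I psi)) x y.

Definition IndGU (n : nat) (psi : 'M[F]_n -> algC) (g : 'M[F]_n) : algC :=
  if g \in GL n then
    (#|UT n|%:R)^-1 *
      \sum_(h in GL n) (let k := invmx h *m g *m h in if k \in UT n then psi k else 0)
  else 0.

End Defs.

(* Writing w for the exchange matrix, x^dagger = w x^T w, so dagger is an
   anti-automorphism mapping the pattern groups UL_I, UR_I, UP_I onto those
   attached to the mirror image of I^c, and it is compatible with the
   relabellings cano.  Reindexing the sums defining mu and Delta by dagger
   therefore swaps the two tensor factors; the one extra input is that
   conjugation by l in UL_I permutes UR_I, so that l r and r l range over the
   same elements.  For induction, (Ind psi^dagger)(g) = (Ind psi)(g^dagger), and
   Ind psi is a class function of GL vanishing off the conjugates of UT.  A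
   unipotent u is GL-conjugate to u^T, because the nilpotent matrix u - 1 is
   similar to its transpose (split off a cyclic block on which a Hankel pairing
   is nondegenerate and induct), hence also to u^dagger. *)

From HB Require Import structures.
From mathcomp Require Import all_boot all_order all_algebra all_field.
From mathcomp Require Import zify.
From Stdlib Require Import FunctionalExtensionality.
Import GRing.Theory.
Local Open Scope ring_scope.

Set Implicit Arguments. Unset Strict Implicit. Unset Printing Implicit Defensive.

Section ExchangeMatrix.
Variable R : pzRingType.

Definition exmx k : 'M[R]_k := \matrix_(i, j) (rev_ord i == j)%:R.

Lemma mul_exmx k m (A : 'M[R]_(k, m)) i j : (exmx k *m A) i j = A (rev_ord i) j.
Proof.
rewrite mxE (bigD1 (rev_ord i)) //= big1 ?addr0 => [|l ne]; first by rewrite mxE eqxx mul1r.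
by rewrite mxE eq_sym (negbTE ne) mul0r.
Qed.

Lemma mulmx_exmx m k (A : 'M[R]_(m, k)) i j : (A *m exmx k) i j = A i (rev_ord j).
Proof.
rewrite mxE (bigD1 (rev_ord j)) //= big1 ?addr0 => [|l ne].
  by rewrite mxE rev_ordK eqxx mulr1.
rewrite mxE (_ : rev_ord l == j = false) ?mulr0 //.
  by apply: contraNF ne => /eqP <-; rewrite rev_ordK.
Qed.

Lemma exmxK k : exmx k *m exmx k = 1%:M.
Proof. by apply/matrixP => i j; rewrite mul_exmx !mxE rev_ordK. Qed.

End ExchangeMatrix.

Lemma exmx_unit (F : fieldType) k : exmx F k \in unitmx.
Proof. by case: (mulmx1_unit (exmxK F k)). Qed.

Section NilpotentTranspose.
Variable F : fieldType.

Lemma sum_delta_nat k p (X : 'I_k -> F) (Y : nat -> F) :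
  (forall q : 'I_k, X q = Y q) -> ((k <= p)%N -> Y p = 0) ->
  \sum_(q < k) ((q == p :> nat)%:R * X q) = Y p.
Proof.
move=> XY Y0; case: (ltnP p k) => [pk | kp].
  rewrite (bigD1 (Ordinal pk)) //= eqxx mul1r XY big1 ?addr0 // => q.
  by rewrite -val_eqE /= => /negbTE ->; rewrite mul0r.
by rewrite big1 ?Y0 // => q _; rewrite ltn_eqF ?mul0r // (leq_trans (ltn_ord q) kp).
Qed.

Lemma mx_neq0_entry m n (A : 'M[F]_(m, n)) : A != 0 -> exists i j, A i j != 0.
Proof.
move=> /eqP A0; case: (pickP (fun ij : 'I_m * 'I_n => A ij.1 ij.2 != 0)) => [[i j] | A0'].
  by exists i, j.
by case: A0; apply/matrixP => i j; rewrite mxE; apply/eqP; exact: negbFE (A0' (i, j)).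
Qed.

Lemma expmx_eq0_le n (N : 'M[F]_n) k m : N ^+ k = 0 -> (k <= m)%N -> N ^+ m = 0.
Proof. by move=> Nk km; rewrite -(subnK km) exprD Nk mulr0. Qed.

Definition shiftmx k : 'M[F]_k := \matrix_(p, q) (q == p.+1 :> nat)%:R.

Lemma nilpotent_cyclic_block n k (N : 'M[F]_n) : N ^+ k.+1 = 0 -> N ^+ k != 0 ->
  exists (C : 'M_(k.+1, n)) (K : 'M_(n, k.+1)),
    [/\ C *m K \in unitmx, C *m N = shiftmx k.+1 *m C & N *m K = K *m (shiftmx k.+1)^T].
Proof.
move=> Nk1 /mx_neq0_entry[i [j Nkij]].
have Nge m : (k < m)%N -> N ^+ m = 0 by apply: expmx_eq0_le.
pose C : 'M_(k.+1, n) := \matrix_(p, l) (N ^+ p) i l.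
pose K : 'M_(n, k.+1) := \matrix_(l, q) (N ^+ q) l j.
exists C, K; split.
- have CK p q : (C *m K) p q = (N ^+ (p + q)) i j.
    by rewrite exprD [RHS]mxE mxE; apply: eq_bigr => l _; rewrite !mxE.
  (* reversing the rows of the Hankel matrix [C *m K] makes it lower triangular *)
  have trig : is_trig_mx (exmx F k.+1 *m (C *m K)).
    by apply/is_trig_mxP => p q pq; rewrite mul_exmx CK Nge ?mxE //=; lia.
  have : exmx F k.+1 *m (C *m K) \in unitmx.
    rewrite unitmxE det_trig // (eq_bigr (fun=> (N ^+ k) i j)) => [|p _].
      by rewrite prodr_const card_ord unitfE expf_neq0.
    by rewrite mul_exmx CK /= subSS subnK // -ltnS.
  by rewrite unitmx_mul => /andP[].
- apply/matrixP => p l; rewrite [RHS]mxE.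
  under eq_bigr do rewrite [shiftmx _ _ _]mxE.
  rewrite (@sum_delta_nat _ _ _ (fun m => (N ^+ m) i l)) => [|q|]; last 2 first.
  + by rewrite mxE.
  + by move=> /Nge->; rewrite mxE.
  by rewrite exprSr mxE [RHS]mxE; apply: eq_bigr => t _; rewrite !mxE.
- apply/matrixP => l q; rewrite [RHS]mxE.
  under eq_bigr do rewrite [_^T _ _]mxE [shiftmx _ _ _]mxE mulrC.
  rewrite (@sum_delta_nat _ _ _ (fun m => (N ^+ m) l j)) => [|p|]; last 2 first.
  + by rewrite mxE.
  + by move=> /Nge->; rewrite mxE.
  by rewrite exprS mxE [RHS]mxE; apply: eq_bigr => t _; rewrite !mxE.
Qed.

Lemma complement_block n k (N : 'M[F]_n) (C : 'M_(k, n)) (K : 'M_(n, k)) (A A' : 'M_k) :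
  C *m K \in unitmx -> C *m N = A *m C -> N *m K = K *m A' ->
  exists m (Q : 'M_(k + m, n)) (N' : 'M_m),
    [/\ (k + m)%N = n, row_free Q, row_full Q, Q *m N = block_mx A 0 0 N' *m Q
      & forall j, N ^+ j = 0 -> N' ^+ j = 0].
Proof.
move=> uCK CN NK.
have rC : \rank C = k.
  by apply/eqP; rewrite eqn_leq rank_leq_row -{1}(mxrank_unit uCK) mxrankM_maxl.
have rK : \rank K = k.
  by apply/eqP; rewrite eqn_leq rank_leq_col -{1}(mxrank_unit uCK) mxrankM_maxr.
have kn : (k <= n)%N by rewrite -rC rank_leq_col.
pose W := row_base (kermx K).
have WK : W *m K = 0 by apply/sub_kermxP; rewrite eq_row_base.
have rW : \rank (kermx K) = (n - k)%N by rewrite mxrank_ker rK.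
have CW0 : (C :&: W)%MS = 0.
  apply/eqP; rewrite -submx0; apply/rV_subP => x.
  rewrite sub_capmx => /andP[/submxP[y ->] /submxP[z xz]].
  have : y *m (C *m K) = 0 by rewrite mulmxA xz -mulmxA WK mulmx0.
  by move/(congr1 (mulmx^~ (invmx (C *m K)))); rewrite mulmxK // mul0mx => ->; rewrite mul0mx sub0mx.
pose Q := col_mx C W.
have rQ : \rank Q = n by rewrite -addsmxE mxrank_disjoint_sum // rC eq_row_base rW subnKC.
have WN : (W *m N <= W)%MS.
  by rewrite eq_row_base; apply/sub_kermxP; rewrite -mulmxA NK mulmxA WK mul0mx.
pose N' := W *m N *m pinvmx W.
have N'W1 : N' *m W = W *m N by rewrite mulmxKpV.
have N'W j : N' ^+ j *m W = W *m N ^+ j.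
  elim: j => [|j IHj]; first by rewrite !expr0 mul1mx mulmx1.
  by rewrite exprSr -mulmxE -mulmxA N'W1 mulmxA IHj exprSr -mulmxE mulmxA.
exists (\rank (kermx K)), Q, N'; split.
- by rewrite rW subnKC.
- by rewrite /row_free rQ rW subnKC.
- by rewrite /row_full rQ.
- by rewrite mul_col_mx mul_block_col !mul0mx addr0 add0r CN N'W1.
- move=> j Nj; apply: (row_free_inj (row_base_free (kermx K))).
  by rewrite /= N'W Nj mulmx0 mul0mx.
Qed.

Lemma similar_trmx_pullback m n (Q : 'M[F]_(m, n)) (N : 'M_n) (B P : 'M_m) :
  row_free Q -> row_full Q -> Q *m N = B *m Q -> P \in unitmx -> P *m B = B^T *m P ->
  Q^T *m P *m Q \in unitmx /\ (Q^T *m P *m Q) *m N = N^T *m (Q^T *m P *m Q).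
Proof.
move=> fQ uQ QN uP PB; split.
  have mn : m = n by rewrite -(eqP fQ) (eqP uQ).
  rewrite -row_full_unit /row_full mxrankMfree // -mxrank_tr trmx_mul trmxK.
  by rewrite mxrankMfree // mxrank_tr mxrank_unit // mn.
rewrite -!mulmxA QN !mulmxA -(mulmxA _ P) PB.
by rewrite !mulmxA -trmx_mul -QN trmx_mul.
Qed.

Lemma invmx_intertwine n (G A B : 'M[F]_n) : G \in unitmx ->
  A *m G = G *m B -> invmx G *m A = B *m invmx G.
Proof.
by move=> uG AG; rewrite -[LHS]mulmx1 -(mulmxV uG) !mulmxA -(mulmxA _ A) AG mulmxA mulVmx ?mul1mx.
Qed.

Lemma invmx_mul n (A B : 'M[F]_n) : A \in unitmx -> B \in unitmx ->
  invmx (A *m B) = invmx B *m invmx A.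
Proof.
move=> uA uB; have uAB : A *m B \in unitmx by rewrite unitmx_mul uA uB.
apply: (can_inj (mulKmx uAB)); rewrite mulmxV // -mulmxA (mulmxA B) mulmxV //.
by rewrite mul1mx mulmxV.
Qed.

Theorem nilpotent_similar_trmx n (N : 'M[F]_n) k : N ^+ k = 0 ->
  exists2 P, P \in unitmx & P *m N = N^T *m P.
Proof.
elim/ltn_ind: n N k => n IH N k0 Nk0.
have exk : exists k, N ^+ k == 0 by exists k0; rewrite Nk0.
case: (ex_minnP exk) => -[|k] /eqP Nk kmin.
  have all0 (A : 'M[F]_n) : A = 0 by rewrite -[A]mulr1 -(expr0 N) Nk mulr0.
  by exists 1%:M; rewrite ?unitmx1 // (all0 (_ *m N)) (all0 (_ *m _)).
have Nk' : N ^+ k != 0 by apply/negP => /kmin; rewrite ltnn.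
have [C [K [uG CN NK]]] := nilpotent_cyclic_block Nk Nk'.
have [m [Q [N' [km fQ uQ QN N'nil]]]] := complement_block uG CN NK.
have [|P' uP' P'N'] := IH m _ N' _ (N'nil _ Nk); first by rewrite -km; lia.
set G := C *m K in uG.
have GS : shiftmx k.+1 *m G = G *m (shiftmx k.+1)^T by rewrite mulmxA -CN -mulmxA NK mulmxA.
pose PB := block_mx (invmx G) 0 0 P'.
have uPB : PB \in unitmx by rewrite unitmxE det_ublock unitrM -!unitmxE unitmx_inv uG uP'.
have PBB : PB *m block_mx (shiftmx k.+1) 0 0 N' = (block_mx (shiftmx k.+1) 0 0 N')^T *m PB.
  rewrite tr_block_mx !trmx0 !mulmx_block !mulmx0 !mul0mx !addr0 !add0r.
  by rewrite P'N' (invmx_intertwine uG GS).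
have [uP PN] := similar_trmx_pullback fQ uQ QN uPB PBB.
by exists (Q^T *m PB *m Q).
Qed.

End NilpotentTranspose.

Section Dagger.
Variables (F : finFieldType) (n : nat).
Implicit Types (A B : 'M[F]_n).

Lemma dagE A i j : dag A i j = A (rev_ord j) (rev_ord i).
Proof. by rewrite mxE. Qed.

Lemma dagK : involutive (@dag F n).
Proof. by move=> A; apply/matrixP => i j; rewrite !mxE !rev_ordK. Qed.

Lemma dag_inj : injective (@dag F n).
Proof. exact: inv_inj dagK. Qed.

Lemma dag_exmx A : dag A = exmx F n *m A^T *m exmx F n.
Proof. by apply/matrixP => i j; rewrite mulmx_exmx mul_exmx !mxE. Qed.

Lemma dagM A B : dag (A *m B) = dag B *m dag A.
Proof.
rewrite !dag_exmx trmx_mul -!mulmxA (mulmxA (exmx F n) (exmx F n)) exmxK.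
by rewrite mul1mx.
Qed.

Lemma dag1 : dag (1%:M : 'M[F]_n) = 1%:M.
Proof. by apply/matrixP => i j; rewrite !mxE (inj_eq rev_ord_inj) eq_sym. Qed.

Lemma dagB1 A : dag (A - 1%:M) = dag A - 1%:M.
Proof. by apply/matrixP => i j; rewrite !mxE (inj_eq rev_ord_inj) eq_sym. Qed.

Lemma dag_unitmx A : (dag A \in unitmx) = (A \in unitmx).
Proof. by rewrite dag_exmx !unitmx_mul unitmx_tr exmx_unit andbT. Qed.

Lemma dag_invmx A : invmx (dag A) = dag (invmx A).
Proof.
case/boolP: (A \in unitmx) => [uA | nuA]; last by rewrite !invmx_out // inE dag_unitmx.
have uAd : dag A \in unitmx by rewrite dag_unitmx.
by rewrite -[LHS]mul1mx -dag1 -(mulmxV uA) dagM mulmxK.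
Qed.

End Dagger.

Section Patterns.
Variables (F : finFieldType) (n : nat).
Implicit Types (A B g h : 'M[F]_n) (R : rel 'I_n).

Definition supported R A := [forall i, forall j, (A i j != 0) ==> R i j].

Lemma supportedP R A : reflect (forall i j, A i j != 0 -> R i j) (supported R A).
Proof.
apply: (iffP forallP) => [S i j | S i]; first by move: (S i) => /forallP/(_ j)/implyP.
by apply/forallP => j; apply/implyP/S.
Qed.

Lemma eq_supported R1 R2 A : R1 =2 R2 -> supported R1 A = supported R2 A.
Proof. by move=> E; apply/supportedP/supportedP => S i j /S; rewrite E. Qed.

Lemma supported_sub R1 R2 A : subrel R1 R2 -> supported R1 A -> supported R2 A.
Proof. by move=> sR /supportedP S; apply/supportedP => i j /S/sR. Qed.

Lemma supported_and R1 R2 A :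
  supported [rel i j | R1 i j && R2 i j] A = supported R1 A && supported R2 A.
Proof.
apply/supportedP/andP => [S | [/supportedP S1 /supportedP S2] i j Aij].
  by split; apply/supportedP => i j /S /andP[].
by rewrite /= S1 ?S2.
Qed.

Lemma supportedD R A B : supported R A -> supported R B -> supported R (A + B).
Proof.
move=> /supportedP SA /supportedP SB; apply/supportedP => i j; rewrite mxE.
by case: (eqVneq (A i j) 0) => [-> | /SA //]; rewrite add0r => /SB.
Qed.

Lemma supportedM R1 R2 R3 A B : (forall i k j, R1 i k -> R2 k j -> R3 i j) ->
  supported R1 A -> supported R2 B -> supported R3 (A *m B).
Proof.
move=> R123 /supportedP SA /supportedP SB; apply/supportedP => i j; rewrite mxE => ABij.
have /existsP[k] : [exists k, A i k * B k j != 0].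
  by apply: contraR ABij => /existsPn AB0; rewrite big1 // => k _; apply/eqP/negPn/AB0.
by rewrite mulf_eq0 negb_or => /andP[/SA ik /SB kj]; apply: R123 ik kj.
Qed.

Lemma supported_subr1 R g :
  supported R (g - 1%:M) -> supported [rel i j | (i == j) || R i j] g.
Proof.
move=> /supportedP S; apply/supportedP => i j gij /=.
by case: eqP => //= /eqP ij; apply: S; rewrite !mxE (negbTE ij) subr0.
Qed.

Lemma supported_ltn_expmx A : supported [rel i j : 'I_n | (i < j)%N] A ->
  forall m (i j : 'I_n), (j < i + m)%N -> (A ^+ m) i j = 0.
Proof.
move=> /supportedP SA; elim=> [|m IHm] i j.
  by rewrite addn0 expr0 mxE => ji; rewrite -val_eqE gtn_eqF.
rewrite addnS exprSr mxE => jim; apply: big1 => k _.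
case: (ltnP k (i + m)) => [kim | ikm]; first by rewrite IHm // mul0r.
case: (eqVneq (A k j) 0) => [-> | /SA /= kj]; first by rewrite mulr0.
by move: jim; rewrite ltnS leqNgt (leq_ltn_trans ikm kj).
Qed.

Definition pattern R : {set 'M[F]_n} := [set g | supported R (g - 1%:M)].

Lemma pattern1 R : 1%:M \in pattern R.
Proof. by rewrite inE subrr; apply/supportedP => i j; rewrite mxE eqxx. Qed.

Lemma patternM R g h : transitive R ->
  g \in pattern R -> h \in pattern R -> g *m h \in pattern R.
Proof.
rewrite !inE => R_trans Sg Sh.
have -> : g *m h - 1%:M = (g - 1%:M) *m (h - 1%:M) + (g - 1%:M) + (h - 1%:M).
  by rewrite mulmxBl !mulmxBr !mulmx1 mul1mx addrAC subrK addrA subrK.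
apply: (supportedD _ Sh); apply: (supportedD _ Sg).
by apply: supportedM Sg Sh => i k j; apply: R_trans.
Qed.

Lemma pattern_unitmx R g : (forall i j, R i j -> (i < j)%N) ->
  g \in pattern R -> g \in unitmx.
Proof.
rewrite inE => R_lt /supportedP Sg.
have gE (i j : 'I_n) : (j <= i)%N -> g i j = (i == j)%:R.
  move=> ji; apply/eqP; rewrite -subr_eq0; apply: contraLR ji => gij.
  by rewrite -ltnNge R_lt // Sg // !mxE.
rewrite -unitmx_tr unitmxE det_trig.
  by rewrite big1 ?unitr1 // => i _; rewrite mxE gE ?eqxx.
by apply/is_trig_mxP => i j ij; rewrite mxE gE ?(ltnW ij) // -val_eqE gtn_eqF.
Qed.

Lemma invmx_closed (S : {set 'M[F]_n}) : 1%:M \in S ->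
  {in S &, forall a b, a *m b \in S} -> {subset S <= unitmx} ->
  {in S, forall a, invmx a \in S}.
Proof.
move=> S1 SM Su a aS; have ua := Su a aS.
have aS_eq : [set a *m b | b in S] = S.
  apply/eqP; rewrite eqEcard card_imset ?leqnn ?andbT; last exact: can_inj (mulKmx ua).
  by apply/subsetP => _ /imsetP[b bS ->]; apply: SM.
move: S1; rewrite -{1}aS_eq => /imsetP[b bS /(congr1 (mulmx (invmx a)))].
by rewrite mulmx1 mulKmx // => ->.
Qed.

Lemma pattern_invmx R g : transitive R -> (forall i j, R i j -> (i < j)%N) ->
  g \in pattern R -> invmx g \in pattern R.
Proof.
move=> R_trans R_lt; apply: invmx_closed (pattern1 R) _ _ g => [a b | a].
  exact: patternM.
exact: pattern_unitmx.
Qed.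

End Patterns.
Arguments pattern {F n} R.

Section UnitriangularBlocks.
Variables (F : finFieldType) (n : nat).
Implicit Types (g h l r : 'M[F]_n) (I : {set 'I_n}).

Definition ut_rel : rel 'I_n := [rel i j : 'I_n | (i < j)%N].
Definition ul_rel I : rel 'I_n := [rel i j : 'I_n | (i < j)%N && ((i \in I) == (j \in I))].
Definition ur_rel I : rel 'I_n := [rel i j : 'I_n | (i < j)%N && ((i \in I) && (j \notin I))].
Definition up_rel I : rel 'I_n := [rel i j : 'I_n | (i < j)%N && ((i \in I) || (j \notin I))].

Lemma UTE : UT F n = pattern ut_rel.
Proof.
apply/setP => g; rewrite !inE; apply/forallP/supportedP => [gU i j | S i].
  rewrite /ut_rel /= ltnNge; apply: contra => ji.
  by move: (gU i) => /forallP/(_ j)/implyP/(_ ji)/eqP; rewrite !mxE => ->; rewrite subrr.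
apply/forallP => j; apply/implyP => ji; rewrite -subr_eq0; have := S i j; rewrite !mxE => Sij.
by apply: contraLR ji => /Sij; rewrite /ut_rel /= -ltnNge.
Qed.

Lemma ULE I : UL F I = pattern (ul_rel I).
Proof. by apply/setP => g; rewrite in_set UTE !in_set supported_and. Qed.

Lemma URE I : UR F I = pattern (ur_rel I).
Proof. by apply/setP => g; rewrite in_set UTE !in_set supported_and. Qed.

Lemma UPE I : UP F I = pattern (up_rel I).
Proof.
apply/setP => g; rewrite in_set UTE !in_set supported_and; congr (_ && _).
apply/forallP/supportedP => [S i j | S i].
  by apply: contraR; rewrite negb_or negbK => hij; move: (S i) => /forallP/(_ j)/implyP/(_ hij).
apply/forallP => j; apply/implyP => hij; apply: contraTT hij => /S /=.
by rewrite negb_and negbK orbC.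
Qed.

Lemma ut_rel_trans : transitive ut_rel.
Proof. exact: ltn_trans. Qed.

Lemma ul_rel_trans I : transitive (ul_rel I).
Proof.
move=> k i j /andP[ik Pik] /andP[kj Pkj]; apply/andP; split; first exact: ltn_trans ik kj.
by move: Pik Pkj; case: (i \in I); case: (j \in I); case: (k \in I).
Qed.

Lemma up_rel_trans I : transitive (up_rel I).
Proof.
move=> k i j /andP[ik Pik] /andP[kj Pkj]; apply/andP; split; first exact: ltn_trans ik kj.
by move: Pik Pkj; case: (i \in I); case: (j \in I); case: (k \in I).
Qed.

Lemma UT_mul g h : g \in UT F n -> h \in UT F n -> g *m h \in UT F n.
Proof. by rewrite UTE; apply: patternM ut_rel_trans. Qed.

Lemma UT_invmx g : g \in UT F n -> invmx g \in UT F n.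
Proof. by rewrite UTE; apply: pattern_invmx ut_rel_trans _. Qed.

Lemma UT_unitmx g : g \in UT F n -> g \in unitmx.
Proof. by rewrite UTE; apply: pattern_unitmx. Qed.

Lemma UL_invmx I l : l \in UL F I -> invmx l \in UL F I.
Proof. by rewrite ULE; apply: pattern_invmx (@ul_rel_trans I) _ => i j /andP[]. Qed.

Lemma UP_mul I g h : g \in UP F I -> h \in UP F I -> g *m h \in UP F I.
Proof. by rewrite UPE; apply: patternM (@up_rel_trans I). Qed.

Lemma UL_sub_UT I : {subset UL F I <= UT F n}.
Proof. by move=> g; rewrite inE => /andP[]. Qed.

Lemma UR_sub_UT I : {subset UR F I <= UT F n}.
Proof. by move=> g; rewrite inE => /andP[]. Qed.

Lemma UL_sub_UP I : {subset UL F I <= UP F I}.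
Proof.
move=> g; rewrite ULE UPE !in_set; apply: supported_sub => i j /andP[ij Pij]; rewrite /up_rel /= ij.
by move: Pij; case: (i \in I); case: (j \in I).
Qed.

Lemma UR_sub_UP I : {subset UR F I <= UP F I}.
Proof.
move=> g; rewrite URE UPE !in_set; apply: supported_sub => i j /andP[ij Pij]; rewrite /up_rel /= ij.
by move: Pij; case: (i \in I); case: (j \in I).
Qed.

Lemma ULC I : UL F (~: I) = UL F I.
Proof.
apply/setP => g; rewrite !ULE !in_set; apply: eq_supported => i j /=.
by rewrite /ul_rel /= !inE; case: (i \in I); case: (j \in I).
Qed.

Lemma memJ_UR I l r : l \in UL F I ->
  (l *m r *m invmx l \in UR F I) = (r \in UR F I).
Proof.
suff URJ l' r' : l' \in UL F I -> r' \in UR F I -> l' *m r' *m invmx l' \in UR F I.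
  move=> lU; have ul := UT_unitmx (UL_sub_UT lU).
  apply/idP/idP => [/(URJ _ _ (UL_invmx lU)) | /(URJ _ _ lU)//].
  by rewrite invmxK !mulmxA mulVmx // mul1mx mulmxKV.
move=> lU; rewrite !URE !in_set => rS; have ul := UT_unitmx (UL_sub_UT lU).
have lS g : g \in UL F I -> supported [rel i j | (i == j) || ul_rel I i j] g.
  by rewrite ULE in_set => /supported_subr1.
have -> : l' *m r' *m invmx l' - 1%:M = l' *m (r' - 1%:M) *m invmx l'.
  by rewrite mulmxBr mulmx1 mulmxBl mulmxV.
have S1 : supported (ur_rel I) (l' *m (r' - 1%:M)).
  apply: supportedM (lS _ lU) rS => i k j /orP[/eqP-> // | /andP[ik eqI]].
  case/andP=> kj /andP[kI jI]; rewrite /ur_rel /= (ltn_trans ik kj) jI andbT.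
  by rewrite (eqP eqI).
apply: supportedM S1 (lS _ (UL_invmx lU)) => i k j /andP[ik /andP[iI kI]].
case/orP=> [/eqP<- | /andP[kj eqI]]; first by rewrite /ur_rel /= ik iI kI.
by rewrite /ur_rel /= (ltn_trans ik kj) iI -(eqP eqI).
Qed.

Lemma UT_nilpotent u : u \in UT F n -> (u - 1%:M) ^+ n = 0.
Proof.
rewrite UTE in_set => uS; apply/matrixP => i j; rewrite mxE supported_ltn_expmx //.
by rewrite (leq_trans (ltn_ord j)) // leq_addl.
Qed.

End UnitriangularBlocks.

Section Reversal.
Variables (F : finFieldType) (n : nat).
Implicit Types (A g l : 'M[F]_n) (I J : {set 'I_n}).

Definition rev_set I : {set 'I_n} := @rev_ord n @: I.

Lemma mem_rev_set I i : (i \in rev_set I) = (rev_ord i \in I).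
Proof.
apply/imsetP/idP => [[j jI ->] | iI]; first by rewrite rev_ordK.
by exists (rev_ord i); rewrite ?rev_ordK.
Qed.

Lemma rev_setK : involutive rev_set.
Proof. by move=> I; apply/setP => i; rewrite !mem_rev_set rev_ordK. Qed.

Lemma rev_setC I : rev_set (~: I) = ~: rev_set I.
Proof. by apply/setP => i; rewrite !inE !mem_rev_set inE. Qed.

Lemma card_rev_set I : #|rev_set I| = #|I|.
Proof. exact: card_imset rev_ord_inj. Qed.

Lemma rev_setCK : involutive (fun I => rev_set (~: I)).
Proof. by move=> I; rewrite -rev_setC setCK rev_setK. Qed.

Lemma ltn_rev_ord (i j : 'I_n) : (rev_ord i < rev_ord j)%N = (j < i)%N.
Proof. by have := ltn_ord i; have := ltn_ord j; rewrite /= => ? ?; apply/idP/idP; lia. Qed.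

Lemma supported_dag (R : rel 'I_n) A :
  supported R (dag A) = supported [rel i j | R (rev_ord j) (rev_ord i)] A.
Proof.
apply/supportedP/supportedP => /= S i j.
  by move=> Aij; have := S (rev_ord j) (rev_ord i); rewrite dagE !rev_ordK; apply.
by rewrite dagE => /S; rewrite !rev_ordK.
Qed.

Lemma dag_UT g : (dag g \in UT F n) = (g \in UT F n).
Proof.
rewrite UTE !in_set -dagB1 supported_dag; apply: eq_supported => i j.
by rewrite /ut_rel /= ltn_rev_ord.
Qed.

Lemma dag_UL I g : (dag g \in UL F I) = (g \in UL F (rev_set I)).
Proof.
rewrite !ULE !in_set -dagB1 supported_dag; apply: eq_supported => i j.
by rewrite /ul_rel /= ltn_rev_ord !mem_rev_set eq_sym.
Qed.

Lemma dag_UR I g : (dag g \in UR F I) = (g \in UR F (~: rev_set I)).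
Proof.
rewrite !URE !in_set -dagB1 supported_dag; apply: eq_supported => i j.
rewrite /ur_rel /= ltn_rev_ord !inE !mem_rev_set.
by case: (i < j)%N; case: (rev_ord j \in I); case: (rev_ord i \in I).
Qed.

Lemma dag_UP I g : (dag g \in UP F I) = (g \in UP F (~: rev_set I)).
Proof.
rewrite !UPE !in_set -dagB1 supported_dag; apply: eq_supported => i j.
by rewrite /up_rel /= ltn_rev_ord !inE !mem_rev_set negbK orbC.
Qed.

Lemma cano_rev_ord I i : i \in I ->
  (cano (rev_set I) (rev_ord i) + cano I i).+1 = #|I|.
Proof.
move=> iI; rewrite /cano.
have -> : [set k in rev_set I | (k < rev_ord i)%N] = rev_set [set k in I | (i < k)%N].
  by apply/setP => k; rewrite !inE !mem_rev_set inE -ltn_rev_ord rev_ordK.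
rewrite card_rev_set -(cardsID [set k : 'I_n | (k < i)%N] I).
have -> : I :&: [set k : 'I_n | (k < i)%N] = [set k in I | (k < i)%N].
  by apply/setP => k; rewrite !inE.
have -> : I :\: [set k : 'I_n | (k < i)%N] = i |: [set k in I | (i < k)%N].
  apply/setP => k; rewrite !inE -leqNgt -val_eqE.
  by case: (ltngtP k i) => [_ | _ | /val_inj->]; rewrite ?andbF ?andbT ?orbF.
by rewrite cardsU1 inE ltnn andbF add1n addnS addnC.
Qed.

Lemma relabP k I l (x : 'M[F]_k) :
  reflect (forall i j (r s : 'I_k), i \in I -> j \in I ->
             cano I i = r -> cano I j = s -> l i j = x r s)
          (relab I l x).
Proof.
apply: (iffP forallP) => [R i j r s iI jI ir js | R i].
  move: (R i) => /implyP/(_ iI)/forallP/(_ j)/implyP/(_ jI)/forallP/(_ r).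
  by move=> /forallP/(_ s)/implyP; rewrite ir js !eqxx => /(_ isT)/eqP.
apply/implyP => iI; apply/forallP => j; apply/implyP => jI.
apply/forallP => r; apply/forallP => s; apply/implyP => /andP[/eqP ir /eqP js].
by apply/eqP; apply: R.
Qed.

Lemma relab_dag k I l (x : 'M[F]_k) : #|I| = k ->
  relab (rev_set I) (dag l) (dag x) = relab I l x.
Proof.
suff relabW J l' (x' : 'M[F]_k) :
    #|J| = k -> relab J l' x' -> relab (rev_set J) (dag l') (dag x').
  move=> cI; apply/idP/idP; last exact: relabW.
  by rewrite -{2}(dagK l) -{2}(dagK x) -{2}(rev_setK I); apply: relabW; rewrite card_rev_set.
move=> cJ /relabP R; apply/relabP => i j r s iJ jJ ir js.
rewrite mem_rev_set in iJ; rewrite mem_rev_set in jJ; rewrite !dagE; apply: R => //.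
  by have := cano_rev_ord jJ; rewrite rev_ordK js cJ /=; lia.
by have := cano_rev_ord iJ; rewrite rev_ordK ir cJ /=; lia.
Qed.

Lemma card_initI a : (a <= n)%N -> #|initI n a| = a.
Proof.
move=> an; have -> : initI n a = widen_ord an @: [set: 'I_a].
  apply/setP => k; rewrite inE; apply/idP/imsetP => [ka | [k' _ ->]]; last exact: (ltn_ord k').
  by exists (Ordinal ka) => //; apply: val_inj.
by rewrite card_imset ?cardsT ?card_ord // => u v /(congr1 val) /= /val_inj.
Qed.

Lemma card_initIC a b : (a + b)%N = n -> #|~: initI n a| = b.
Proof.
move=> abn; have an : (a <= n)%N by rewrite -abn leq_addr.
by have := cardsC (initI n a); rewrite card_ord card_initI //; lia.
Qed.

Lemma rev_set_initI a b : (a + b)%N = n -> rev_set (initI n b) = ~: initI n a.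
Proof.
move=> abn; apply/setP => k; rewrite mem_rev_set !inE.
by have := ltn_ord k; rewrite /= => ?; apply/idP/idP; lia.
Qed.

End Reversal.

Section DaggerHopf.
Variable F : finFieldType.

Lemma dmapK n : involutive (@dmap F n).
Proof. by move=> psi; apply: functional_extensionality => g; rewrite /dmap dagK. Qed.

Lemma dmap_cf n (psi : 'M[F]_n -> algC) :
  is_cf (UT F n) psi -> is_cf (UT F n) (dmap psi).
Proof.
case=> psi0 psiJ; split => [g gU | g h gU hU]; rewrite /dmap.
  by apply: psi0; rewrite dag_UT.
have hdU : dag (invmx h) \in UT F n by rewrite dag_UT UT_invmx.
have -> : dag (invmx h *m g *m h) = invmx (dag (invmx h)) *m dag g *m dag (invmx h).
  by rewrite dag_invmx invmxK !dagM mulmxA.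
by rewrite psiJ // dag_UT.
Qed.

Lemma sum_UR_mul_swap n I (l g : 'M[F]_n) (c : algC) : l \in UL F I ->
  \sum_(r in UR F I | g == r *m l) c = \sum_(r in UR F I | g == l *m r) c.
Proof.
move=> lU; have ul := UT_unitmx (UL_sub_UT lU).
have conj_inj : injective (fun r : 'M[F]_n => l *m r *m invmx l).
  by move=> u v /(congr1 (fun X => invmx l *m X *m l)); rewrite !mulmxA !mulVmx // !mul1mx !mulmxKV.
rewrite (reindex_inj conj_inj) /=; apply: eq_bigl => r.
by rewrite memJ_UR // mulmxKV.
Qed.

Lemma Inf_dag n I (f : 'M[F]_n -> algC) g :
  Inf (rev_set (~: I)) f (dag g) = Inf I (fun l => f (dag l)) g.
Proof.
rewrite /Inf (reindex_inj (@dag_inj F n)) /=.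
apply: eq_big => [l | l]; first by rewrite dag_UL rev_setK ULC.
rewrite dag_UL rev_setK ULC => lU.
rewrite (reindex_inj (@dag_inj F n)) /= -(sum_UR_mul_swap _ _ lU).
by apply: eq_bigl => r; rewrite dag_UR rev_setK setCK -dagM (inj_eq (@dag_inj F n)).
Qed.

Lemma st_inv_dag n a b (I : {set 'I_n}) (Phi : 'M[F]_a -> 'M[F]_b -> algC) (l : 'M[F]_n) :
  #|I| = a -> #|~: I| = b ->
  st_inv (rev_set (~: I)) (fun y x => Phi x y) (dag l)
  = st_inv I (fun x y => Phi (dag x) (dag y)) l.
Proof.
move=> cI cIc; rewrite /st_inv dag_UL rev_setK ULC; case: (l \in UL F I) => //.
have relabC (x : 'M[F]_a) : relab (~: rev_set (~: I)) (dag l) (dag x) = relab I l x.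
  by rewrite rev_setC setCK relab_dag.
rewrite (reindex_inj (@dag_inj F b)) /=.
under eq_bigr => y _ do rewrite (reindex_inj (@dag_inj F a)) /= relab_dag //.
under eq_bigr => y _ do under eq_bigl => x do rewrite relabC andbC.
by rewrite (exchange_big_dep xpredT).
Qed.

Lemma mu_dmap n a b (Phi : 'M[F]_a -> 'M[F]_b -> algC) g : (a + b)%N = n ->
  @mu F n a b (fun x y => Phi (dag x) (dag y)) g = dmap (@mu F n b a (fun y x => Phi x y)) g.
Proof.
move=> abn; rewrite /mu /dmap -[initI n b]rev_setK (rev_set_initI abn) Inf_dag.
rewrite /Inf; apply: eq_bigr => l _; apply: eq_bigr => r _.
by rewrite st_inv_dag ?card_initI ?(card_initIC abn) // -abn; apply: leq_addr.
Qed.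

Lemma st_dag n a b (I : {set 'I_n}) (f : 'M[F]_n -> algC) (x : 'M[F]_a) (y : 'M[F]_b) :
  #|I| = a -> #|~: I| = b ->
  st (rev_set (~: I)) f (dag y) (dag x) = st I (fun l => f (dag l)) x y.
Proof.
move=> cI cIc; rewrite /st (reindex_inj (@dag_inj F n)) /=; apply: eq_bigl => l.
rewrite dag_UL rev_setK ULC relab_dag // rev_setC setCK relab_dag //.
by rewrite [relab _ l y && _]andbC.
Qed.

Lemma Def_Res_dag n (I : {set 'I_n}) (psi : 'M[F]_n -> algC) l :
  is_cf (UT F n) psi -> l \in UL F I ->
  Def (rev_set (~: I)) (Res (rev_set (~: I)) psi) (dag l) = Def I (Res I (dmap psi)) l.
Proof.
case=> _ psiJ lU; rewrite /Def dag_UL rev_setK ULC lU.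
have URdag : UR F (rev_set (~: I)) = @dag F n @: UR F I.
  by apply/setP => r; rewrite -[r]dagK mem_imset ?dag_UR ?rev_setK ?setCK //; apply: dag_inj.
rewrite URdag card_imset; last exact: dag_inj.
congr (_ * _); rewrite big_imset /=; last by move=> ? ? _ _; apply: dag_inj.
apply: eq_bigr => r rU; rewrite /Res /dmap -dagM dag_UP rev_setK setCK.
rewrite (UP_mul (UR_sub_UP rU) (UL_sub_UP lU)) (UP_mul (UL_sub_UP lU) (UR_sub_UP rU)).
have ldU : dag l \in UT F n by rewrite dag_UT (UL_sub_UT lU).
have rdU : dag r \in UT F n by rewrite dag_UT (UR_sub_UT rU).
have -> : dag (l *m r) = invmx (dag l) *m (dag l *m dag r) *m dag l.
  by rewrite dagM mulmxA mulVmx ?mul1mx // UT_unitmx.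
by rewrite psiJ ?dagM //; apply: UT_mul.
Qed.

Lemma Delta_dmap n a b (psi : 'M[F]_n -> algC) (x : 'M[F]_a) (y : 'M[F]_b) :
  (a + b)%N = n -> is_cf (UT F n) psi ->
  @Delta F n a b (dmap psi) x y = @Delta F n b a psi (dag y) (dag x).
Proof.
move=> abn psiC; rewrite /Delta [RHS](reindex_inj (inv_inj (@rev_setCK n))) /=.
apply: eq_big => [I | I /eqP cI].
  rewrite card_rev_set; have := cardsC I; rewrite card_ord => cIC.
  by rewrite -[#|~: I| == b](eqn_add2l a) abn -[X in _ = (_ == X)]cIC eqn_add2r eq_sym.
have cIc : #|~: I| = b by apply: (@addnI a); rewrite abn -cI cardsC card_ord.
rewrite st_dag //; apply: eq_bigr => l /andP[lU _].
by rewrite Def_Res_dag.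
Qed.

Lemma IndGU_conj n (psi : 'M[F]_n -> algC) g P : P \in unitmx ->
  IndGU psi (invmx P *m g *m P) = IndGU psi g.
Proof.
move=> uP; have uPi : invmx P \in unitmx by rewrite unitmx_inv.
rewrite /IndGU !inE !unitmx_mul uPi uP andbT /=.
case: (g \in unitmx) => //; congr (_ * _).
rewrite (reindex_inj (can_inj (mulKmx uPi))) /=.
apply: eq_big => [h | h]; first by rewrite !inE unitmx_mul unitmx_inv uP.
rewrite inE unitmx_mul unitmx_inv uP /= => uh.
by rewrite invmx_mul // invmxK !mulmxA !mulmxK.
Qed.

Lemma IndGU_dmap n (psi : 'M[F]_n -> algC) g : IndGU (dmap psi) g = IndGU psi (dag g).
Proof.
rewrite /IndGU !inE dag_unitmx; case: (g \in unitmx) => //; congr (_ * _).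
pose dagV (h : 'M[F]_n) := dag (invmx h).
have dagVK : involutive dagV by move=> h; rewrite /dagV -dag_invmx dagK invmxK.
rewrite [RHS](reindex_inj (inv_inj dagVK)) /=; apply: eq_big => [h | h _].
  by rewrite !inE /dagV dag_unitmx unitmx_inv.
have -> : invmx (dagV h) *m dag g *m dagV h = dag (invmx h *m g *m h).
  by rewrite /dagV dag_invmx invmxK !dagM mulmxA.
by rewrite dag_UT.
Qed.

Lemma IndGU_eq0 n (psi : 'M[F]_n -> algC) g :
  (forall h, h \in GL F n -> invmx h *m g *m h \notin UT F n) -> IndGU psi g = 0.
Proof.
move=> gU; rewrite /IndGU; case: ifP => // _.
by rewrite big1 ?mulr0 // => h /gU /negbTE /= ->.
Qed.

(* [u - 1] is nilpotent, hence similar to its transpose, and [dag u] is the transpose conjugated by [exmx]. *)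
Lemma UT_dag_conj n (u : 'M[F]_n) : u \in UT F n ->
  exists2 Q, Q \in unitmx & dag u = invmx Q *m u *m Q.
Proof.
move=> uU; have [P uP PN] := nilpotent_similar_trmx (UT_nilpotent uU).
have Pu : P *m u = u^T *m P.
  move: PN; rewrite mulmxBr mulmx1 linearB /= trmx1 mulmxBl mul1mx.
  by move/(congr1 (+%R^~ P)); rewrite /= !subrK.
exists (invmx P *m exmx F n); first by rewrite unitmx_mul unitmx_inv uP exmx_unit.
rewrite invmx_mul ?unitmx_inv ?exmx_unit // invmxK.
have -> : invmx (exmx F n) = exmx F n.
  by rewrite -[LHS]mulmx1 -(exmxK F n) mulmxA mulVmx ?exmx_unit ?mul1mx.
by rewrite dag_exmx -!mulmxA (mulmxA P) Pu -!mulmxA mulKVmx.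
Qed.

Lemma IndGU_dmapE n (psi : 'M[F]_n -> algC) g : IndGU (dmap psi) g = IndGU psi g.
Proof.
case: (pickP [pred h | (h \in GL F n) && (invmx h *m g *m h \in UT F n)]) => [h | noUT].
  case/andP; rewrite inE => uh uU; have [Q uQ dagu] := UT_dag_conj uU.
  have uhd : dag (invmx h) \in unitmx by rewrite dag_unitmx unitmx_inv.
  rewrite IndGU_dmap -(IndGU_conj psi (dag g) uhd) dag_invmx invmxK -mulmxA -!dagM.
  by rewrite dagu !IndGU_conj.
have gU h : h \in GL F n -> invmx h *m g *m h \notin UT F n.
  by move=> hG; move: (noUT h); rewrite /= hG /= => ->.
by rewrite !IndGU_eq0.
Qed.

End DaggerHopf.

Theorem theorem6p2 (F : finFieldType) :
  (* d is a graded linear automorphism of cf(UT_.) (it preserves each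
     cf(UT_n) and is bijective on it) *)
  (forall (n : nat) (psi : 'M[F]_n -> algC),
      is_cf (UT F n) psi -> is_cf (UT F n) (dmap psi)) /\
  (forall (n : nat) (phi : 'M[F]_n -> algC), is_cf (UT F n) phi ->
      exists psi, is_cf (UT F n) psi /\ dmap psi = phi) /\
  (forall (n : nat) (psi1 psi2 : 'M[F]_n -> algC),
      is_cf (UT F n) psi1 -> is_cf (UT F n) psi2 -> dmap psi1 = dmap psi2 -> psi1 = psi2) /\
  (* mu o (d (x) d) = d o mu o beta *)
  (forall (n a b : nat) (Phi : 'M[F]_a -> 'M[F]_b -> algC),
      (a + b)%N = n -> is_cf2 Phi ->
      forall g : 'M[F]_n,
        @mu F n a b (fun x y => Phi (dag x) (dag y)) g
        = dmap (@mu F n b a (fun y x => Phi x y)) g) /\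
  (* Delta o d = beta o (d (x) d) o Delta *)
  (forall (n a b : nat) (psi : 'M[F]_n -> algC),
      (a + b)%N = n -> is_cf (UT F n) psi ->
      forall (x : 'M[F]_a) (y : 'M[F]_b),
        @Delta F n a b (dmap psi) x y = @Delta F n b a psi (dag y) (dag x)) /\
  (* Ind^{GL}_{UT} o d = Ind^{GL}_{UT} *)
  (forall (n : nat) (psi : 'M[F]_n -> algC), is_cf (UT F n) psi ->
      forall g : 'M[F]_n, IndGU (dmap psi) g = IndGU psi g).
Proof.
split; first exact: dmap_cf.
split.
  by move=> n phi phiC; exists (dmap phi); rewrite dmapK; split; first exact: dmap_cf.
split; first by move=> n psi1 psi2 _ _ e; rewrite -(dmapK psi1) e dmapK.
split; first by move=> n a b Phi abn _ g; apply: mu_dmap.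
split; first by move=> n a b psi abn psiC x y; apply: Delta_dmap.
by move=> n psi _ g; apply: IndGU_dmapE.
Qed.
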